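(* Let $\mathsf{T}$ be a rooted plane tree and $\delta\in\mathcal{O}(\mathsf{T})$. Adjoin an imaginary node $\omega$ as the parent of the root, and set $\delta(\omega)=\mathsf{Pop}(\delta)(\omega)=\mathsf{T}\cup\{\omega\}$. Then for any two nodes $u,v\in\mathsf{T}\cup\{\omega\}$, the sets $\delta(u)$ and $\mathsf{Pop}(\delta)(v)$ are either nested (one contains the other) or disjoint.
   Context: A rooted plane tree $\mathsf{T}$ is a finite tree with a distinguished root, regarded as a poset $\leq_\mathsf{T}$ in which $v'\leq_\mathsf{T} v$ iff $v$ lies on the path from $v'$ to the root. An ornament is a nonempty set of nodes inducing a connected subgraph; an ornamentation is a map $\delta$ from nodes to ornaments such that the unique maximal element of $\delta(v)$ is $v$ and any two sets $\delta(v),\delta(v')$ are nested or disjoint. $\mathcal{O}(\mathsf{T})$ is the set of ornamentations ordered by $\delta\leq\delta'$ iff $\delta(v)\subseteq\delta'(v)$ for all $v$; it is a lattice with meet given by pointwise intersection. $\mathsf{Pop}(\delta)=\bigwedge(\{\delta\}\cup\{\delta':\delta'\lessdot\delta\})$, where $\lessdot$ is the cover relation. *)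

From mathcomp Require Import all_boot.
Set Implicit Arguments. Unset Strict Implicit. Unset Printing Implicit Defensive.

Section Tree.
Variables (T : finType) (root : T) (par : T -> T).

(* A rooted tree on the finite node set T: root is its own "parent"
   (sentinel) and every node reaches the root by iterating par. *)
Definition is_rooted_tree : Prop :=
  par root = root /\ forall x : T, exists n, iter n par x = root.

(* v' <=_T v  iff  v lies on the path from v' to the root. *)
Definition tle (x y : T) : bool := connect (frel par) x y.

Definition tadj (x y : T) : bool := (x != y) && ((par x == y) || (par y == x)).

Definition induced_connected (S : {set T}) : bool :=
  [forall x in S, forall y in S,
     connect (fun a b => [&& a \in S, b \in S & tadj a b]) x y].

Definition ornament (S : {set T}) : bool := (S != set0) && induced_connected S.

Definition maximal_elems (S : {set T}) : {set T} :=
  [set x in S | [forall y in S, tle x y ==> (y == x)]].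

Definition nested_or_disjoint (U : finType) (A B : {set U}) : bool :=
  [|| A \subset B, B \subset A | [disjoint A & B]].

Definition ornamentation (d : {ffun T -> {set T}}) : bool :=
  [forall v, ornament (d v) && (maximal_elems (d v) == [set v])] &&
  [forall v, forall v', nested_or_disjoint (d v) (d v')].

Definition orn_le (d d' : {ffun T -> {set T}}) : bool :=
  [forall v, d v \subset d' v].

Definition orn_lt (d d' : {ffun T -> {set T}}) : bool :=
  [&& ornamentation d, ornamentation d', d != d' & orn_le d d'].

Definition orn_covby (d' d : {ffun T -> {set T}}) : bool :=
  orn_lt d' d && ~~ [exists e, orn_lt d' e && orn_lt e d].

(* Pop(d): meet (pointwise intersection) of d and all elements it covers *)
Definition Pop (d : {ffun T -> {set T}}) : {ffun T -> {set T}} :=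
  [ffun v => d v :&: \bigcap_(d' | orn_covby d' d) d' v].

(* Adjoin the imaginary node omega = None as parent of the root,
   with value T u {omega}. *)
Definition extend (d : {ffun T -> {set T}}) (u : option T) : {set option T} :=
  match u with
  | None => setT
  | Some v => Some @: d v
  end.

End Tree.

From mathcomp Require Import all_boot.
Set Implicit Arguments. Unset Strict Implicit.

(* Pop(d)(v) is d(v) intersected with d'(v) for every d' covered by d, so it
   suffices that d(u) be nested with or disjoint from each such d'(v).  The only
   nontrivial case is d(u) included in d(v) with v outside d(u).  The
   ornamentation agreeing with d' on d(u) and with d elsewhere lies between d'
   and d, hence equals one of them: if it is d', then d'(v) = d(v) contains
   d(u); if it is d, then d'(u) = d(u), which is nested with or disjoint from
   d'(v) and cannot contain v.  The imaginary node contributes the full set,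
   which is nested with everything. *)

Lemma nested_or_disjointC (U : finType) (A B : {set U}) :
  nested_or_disjoint A B = nested_or_disjoint B A.
Proof. by rewrite /nested_or_disjoint disjoint_sym orbCA. Qed.

Lemma nested_or_disjoint_imset (aT rT : finType) (f : aT -> rT) (A B : {set aT}) :
  injective f -> nested_or_disjoint A B -> nested_or_disjoint (f @: A) (f @: B).
Proof.
move=> f_inj /or3P[AB | BA | dis]; apply/or3P.
- by apply: Or31; apply: imsetS.
- by apply: Or32; apply: imsetS.
- by apply: Or33; rewrite imset_disjoint.
Qed.

Lemma subset_or_disjoint_bigcap (U I : finType) (A C : {set U}) (P : pred I)
    (F : I -> {set U}) :
  A \subset C -> (forall i, P i -> (A \subset F i) || [disjoint A & F i]) ->
  (A \subset C :&: \bigcap_(i | P i) F i) ||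
  [disjoint A & C :&: \bigcap_(i | P i) F i].
Proof.
move=> AC AF; case: (boolP [forall (i | P i), A \subset F i]).
  by move/forall_inP => AFs; rewrite subsetI AC; apply/orP; left; apply/bigcapsP.
case/forall_inPn => i Pi notAFi; move: (AF i Pi); rewrite (negbTE notAFi) => dis.
by apply/orP; right; apply: disjointWr dis; apply/subIset/orP; right; apply: bigcap_inf.
Qed.

Section RootedTree.
Variables (T : finType) (root : T) (par : T -> T).
Hypothesis htree : is_rooted_tree root par.

Lemma iter_par_root n : iter n par root = root.
Proof. by case: htree => par_root _; elim: n => //= n ->. Qed.

Lemma periodic_par_root n x : iter n.+1 par x = x -> x = root.
Proof.
move=> periodic; have iterM m : iter (m * n.+1) par x = x.
  by elim: m => [|m IHm] //; rewrite mulSn iterD IHm periodic.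
case: htree => _ /(_ x) [N hN].
by rewrite -(iterM N) mulnS addnC iterD hN iter_par_root.
Qed.

Lemma tle_anti x y : tle par x y -> tle par y x -> x = y.
Proof.
move=> /iter_findex xy /iter_findex yx.
set a := findex par x y in xy; set b := findex par y x in yx.
case: a xy => [<- // | a] xy.
have x_root : x = root.
  by apply: (@periodic_par_root (b + a)); rewrite -addnS iterD xy yx.
by rewrite -xy x_root iter_par_root.
Qed.

(* An element of S above x with the fewest upper bounds is maximal in S. *)
Lemma tle_max_elem (S : {set T}) w x :
  maximal_elems par S = [set w] -> x \in S -> tle par x w.
Proof.
move=> maxS xS; pose ups y := [set z | tle par y z].
case: (@arg_minnP _ x (fun y => (y \in S) && tle par x y) (fun y => #|ups y|)).
  by rewrite xS; apply: connect0.
move=> y /andP[yS xy] min_y.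
suff : y \in maximal_elems par S by rewrite maxS inE => /eqP <-.
rewrite inE yS; apply/forallP => z; apply/implyP => zS; apply/implyP => yz.
have ups_zy : ups z \subset ups y.
  by apply/subsetP => t; rewrite !inE; apply: connect_trans.
have : ups z == ups y.
  by rewrite eqEcard ups_zy min_y // zS; apply: connect_trans xy yz.
move=> /eqP ups_eq; have : y \in ups z by rewrite ups_eq inE; apply: connect0.
by rewrite inE => zy; rewrite (tle_anti yz zy).
Qed.

Lemma max_elem_mem (S : {set T}) w : maximal_elems par S = [set w] -> w \in S.
Proof. by move=> maxS; have := set11 w; rewrite -maxS inE => /andP[]. Qed.

Section Ornamentation.
Variable d : {ffun T -> {set T}}.
Hypothesis hd : ornamentation par d.

Lemma ornamentation_ornament v : ornament par (d v).
Proof. by case/andP: hd => /forallP/(_ v)/andP[]. Qed.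

Lemma ornamentation_max v : maximal_elems par (d v) = [set v].
Proof. by case/andP: hd => /forallP/(_ v)/andP[_ /eqP]. Qed.

Lemma ornamentation_nested v v' : nested_or_disjoint (d v) (d v').
Proof. by case/andP: hd => _ /forallP/(_ v)/forallP. Qed.

Lemma ornamentation_self v : v \in d v.
Proof. exact: max_elem_mem (ornamentation_max v). Qed.

Lemma ornamentation_mem_sub u w : w \in d u -> d w \subset d u.
Proof.
move=> wu; case/or3P: (ornamentation_nested w u) => // [uw | dis].
  have uw' : u \in d w := subsetP uw u (ornamentation_self u).
  rewrite (@tle_anti w u) //.
    exact: tle_max_elem (ornamentation_max u) wu.
  exact: tle_max_elem (ornamentation_max w) uw'.
by rewrite (disjointFr dis (ornamentation_self w)) in wu.
Qed.

End Ornamentation.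

Definition orn_patch (d' d : {ffun T -> {set T}}) (S : {set T}) :=
  [ffun w => if w \in S then d' w else d w].

Section Cover.
Variables d' d : {ffun T -> {set T}}.
Hypotheses (hd' : ornamentation par d') (hd : ornamentation par d).
Hypothesis le_d'd : orn_le d' d.

Lemma nested_patch_boundary u w w' :
  w \in d u -> w' \notin d u -> nested_or_disjoint (d' w) (d w').
Proof.
move=> wu w'Nu; have d'w_u : d' w \subset d u.
  exact: subset_trans (forallP le_d'd w) (ornamentation_mem_sub hd wu).
apply/or3P; case/or3P: (ornamentation_nested hd w' u) => [w'_u | uw' | dis].
- by rewrite (subsetP w'_u _ (ornamentation_self hd w')) in w'Nu.
- by apply: Or31; apply: subset_trans d'w_u uw'.
- by apply: Or33; rewrite disjoint_sym; apply: disjointWr d'w_u dis.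
Qed.

Lemma ornamentation_patch u : ornamentation par (orn_patch d' d (d u)).
Proof.
apply/andP; split; apply/forallP => w; rewrite !ffunE.
  by case: ifP => _;
    rewrite ?(ornamentation_ornament hd', ornamentation_max hd')
            ?(ornamentation_ornament hd, ornamentation_max hd) ?eqxx.
apply/forallP => w'; rewrite ffunE.
case: (boolP (w \in d u)) => wu; case: (boolP (w' \in d u)) => w'u.
- exact: ornamentation_nested.
- exact: nested_patch_boundary wu w'u.
- by rewrite nested_or_disjointC; apply: nested_patch_boundary w'u wu.
- exact: ornamentation_nested.
Qed.

Lemma orn_le_patchl S : orn_le d' (orn_patch d' d S).
Proof.
by apply/forallP => w; rewrite ffunE; case: ifP => _; rewrite ?(forallP le_d'd).
Qed.

Lemma orn_le_patchr S : orn_le (orn_patch d' d S) d.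
Proof.
by apply/forallP => w; rewrite ffunE; case: ifP => _; rewrite ?(forallP le_d'd).
Qed.

End Cover.

Lemma orn_covby_between d' d e :
  orn_covby par d' d -> ornamentation par e -> orn_le d' e -> orn_le e d ->
  e = d' \/ e = d.
Proof.
case/andP=> /and4P[hd' hd _ _] no_between he le_d'e le_ed.
case: (eqVneq e d') => [|ne_d']; first by left.
case: (eqVneq e d) => [|ne_d]; first by right.
case/negP: no_between; apply/existsP; exists e.
by rewrite /orn_lt hd' he eq_sym ne_d' le_d'e hd ne_d le_ed.
Qed.

Lemma orn_covby_subset_or_disjoint d' d u v :
  orn_covby par d' d -> v \notin d u -> d u \subset d v ->
  (d u \subset d' v) || [disjoint d u & d' v].
Proof.
move=> cov vNu uv; have /andP[/and4P[hd' hd _ le_d'd] _] := cov.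
have [/ffunP patch_d' | /ffunP patch_d] := orn_covby_between cov
  (ornamentation_patch hd' hd le_d'd u) (orn_le_patchl le_d'd _) (orn_le_patchr le_d'd _).
  by move: (patch_d' v); rewrite ffunE (negbTE vNu) => <-; rewrite uv.
have d'u : d' u = d u by move: (patch_d u); rewrite ffunE ornamentation_self.
have := ornamentation_nested hd' v u; rewrite d'u => /or3P[vu | -> // | dis].
  by rewrite (subsetP vu _ (ornamentation_self hd' v)) in vNu.
by rewrite disjoint_sym dis orbT.
Qed.

Lemma Pop_nested d u v :
  ornamentation par d -> nested_or_disjoint (d u) (Pop par d v).
Proof.
move=> hd; rewrite /Pop ffunE; apply/or3P.
have [vu | vNu] := boolP (v \in d u).
  by apply: Or32; apply: subset_trans (subsetIl _ _) (ornamentation_mem_sub hd vu).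
case/or3P: (ornamentation_nested hd u v) => [uv | vu | dis].
- have [sub | dis] := orP (subset_or_disjoint_bigcap
    (P := orn_covby par ^~ d) (F := fun d' => d' v) uv
    (fun d' cov => orn_covby_subset_or_disjoint cov vNu uv)).
    by apply: Or31.
  by apply: Or33.
- by apply: Or32; apply: subset_trans (subsetIl _ _) vu.
- by apply: Or33; apply: disjointWr (subsetIl _ _) dis.
Qed.

End RootedTree.

Theorem lemma4p1 (T : finType) (root : T) (par : T -> T)
  (htree : is_rooted_tree root par)
  (d : {ffun T -> {set T}}) (hd : ornamentation par d) :
  forall u v : option T,
    nested_or_disjoint (extend d u) (extend (Pop par d) v).
Proof.
case=> [u|] [v|] /=; try by rewrite /nested_or_disjoint subsetT ?orbT.
exact: nested_or_disjoint_imset Some_inj (Pop_nested htree u v hd).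
Qed.
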